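(* Let $G$ be a connected graph of order $n \ge 2$. Then $\dim_{1,f}(G)=\frac{n}{2}$ if and only if $G \in H[\mathcal{K} \cup \overline{\mathcal{K}}]$ for some connected graph $H$.
   Context: All graphs are finite, simple, undirected and connected. $d(x,y)$ is the length of a shortest $x$–$y$ path in $G$. For a positive integer $k$, $d_k(x,y)=\min\{d(x,y),k+1\}$ and $R_k\{x,y\}=\{z\in V(G): d_k(x,z)\neq d_k(y,z)\}$. For a function $g$ on $V(G)$ and $U\subseteq V(G)$, $g(U)=\sum_{s\in U}g(s)$. A function $h:V(G)\to[0,1]$ is a $k$-truncated resolving function of $G$ if $h(R_k\{x,y\})\ge 1$ for all distinct $x,y\in V(G)$; $\dim_{k,f}(G)$ is the minimum of $h(V(G))$ over all such $h$ (here $k=1$). Let $\mathcal{K}=\{K_a: a\ge 2\}$ (complete graphs) and $\overline{\mathcal{K}}=\{\overline{K}_b: b\ge 2\}$ (edgeless graphs). For a connected graph $H$, $H[\mathcal{K}\cup\overline{\mathcal{K}}]$ is the family of graphs obtained from $H$ by replacing each vertex $u_i\in V(H)$ by a graph $H_i\in\mathcal{K}\cup\overline{\mathcal{K}}$, where each vertex of $H_i$ is adjacent to each vertex of $H_j$ ($i\ne j$) if and only if $u_iu_j\in E(H)$. *)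

From mathcomp Require Import all_boot all_order all_algebra.
Set Implicit Arguments. Unset Strict Implicit. Unset Printing Implicit Defensive.
Import Order.TTheory GRing.Theory Num.Theory.

Definition simple_graph (T : finType) (e : rel T) : Prop :=
  symmetric e /\ irreflexive e.

Definition connected_graph (T : finType) (e : rel T) : Prop :=
  forall x y : T, connect e x y.

Fixpoint walk_le (T : finType) (e : rel T) (m : nat) (x y : T) : bool :=
  match m with
  | 0 => x == y
  | m'.+1 => walk_le e m' x y || [exists z, e x z && walk_le e m' z y]
  end.

(* d_k(x,y) = min(d(x,y), k+1): the number of i in {0,..,k} with d(x,y) > i. *)
Definition dtrunc (T : finType) (e : rel T) (k : nat) (x y : T) : nat :=
  \sum_(i < k.+1) ~~ walk_le e i x y.

Definition Rk (T : finType) (e : rel T) (k : nat) (x y : T) : {set T} :=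
  [set z | dtrunc e k x z != dtrunc e k y z].

Local Open Scope ring_scope.

Definition trunc_resolving_fun (R : realFieldType) (T : finType) (e : rel T)
    (k : nat) (h : T -> R) : Prop :=
  (forall v, 0 <= h v <= 1) /\
  (forall x y : T, x != y -> 1 <= \sum_(z in Rk e k x y) h z).

Definition is_frac_trunc_dim (R : realFieldType) (T : finType) (e : rel T)
    (k : nat) (r : R) : Prop :=
  (exists h : T -> R, trunc_resolving_fun e k h /\ \sum_(v : T) h v = r) /\
  (forall h : T -> R, trunc_resolving_fun e k h -> r <= \sum_(v : T) h v).

(* G (up to isomorphism) lies in H[K ∪ K̄] for some connected graph H:
   a vertex map f : V(G) -> V(H) onto, each fibre H_i of size >= 2 that is
   either complete or edgeless, and for vertices in different fibres,
   adjacency in G iff the fibres' indices are adjacent in H. *)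
Definition in_lex_family (T : finType) (e : rel T) : Prop :=
  exists (U : finType) (eH : rel U) (f : T -> U),
    [/\ simple_graph eH, connected_graph eH,
        (forall u : U, 2 <= #|[set x | f x == u]|)%N,
        (forall u : U,
            (forall x y, f x = u -> f y = u -> x != y -> e x y) \/
            (forall x y, f x = u -> f y = u -> ~~ e x y)) &
        (forall x y, f x != f y -> e x y = eH (f x) (f y))].

(** For [k = 1], [R_1{x,y}] consists of [x], [y] and the vertices adjacent
    to exactly one of them, so it is [{x,y}] exactly when [x] and [y] are
    twins.  The constant [1/2] always resolves.  If every vertex has a twin,
    each twin pair forces [h x + h y >= 1], and matching every vertex with
    [h < 1/2] injectively to one of its twins gives [h(V) >= n/2].  If a vertex
    [v] has no twin, [1/2] lowered to [0] at [v] still resolves, so the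
    dimension is below [n/2].  Finally, a graph in which every vertex has a
    twin is the blow-up of its quotient by the twin relation, each class being
    complete or edgeless, and conversely vertices in a common blown-up class
    are twins. *)
From HB Require Import structures.
From mathcomp Require Import all_boot all_order all_algebra.
From mathcomp Require Import lra.
Import Order.TTheory GRing.Theory Num.Theory.
Set Implicit Arguments. Unset Strict Implicit. Unset Printing Implicit Defensive.
Local Open Scope ring_scope.
Local Open Scope quotient_scope.

Lemma sumr_ge0_matching (R : realDomainType) (I : finType) (g : I -> R)
    (t : I -> I) :
  {in [pred x | g x < 0] &, injective t} ->
  (forall x, g x < 0 -> 0 <= g x + g (t x)) ->
  0 <= \sum_x g x.
Proof.
move=> t_inj gt_ge0; set S := [set x | g x < 0].
have tS x : x \in S -> t x \notin S.
  by rewrite !inE -!leNgt => /[dup] /gt_ge0; lra.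
have ge0_notS x : x \notin S -> 0 <= g x by rewrite inE -leNgt.
rewrite (bigID [in S]) [\sum_(i | i \notin S) _](bigID [in t @: S]) /= addrA.
have -> : \sum_(x | (x \notin S) && (x \in t @: S)) g x = \sum_(x in t @: S) g x.
  apply: eq_bigl => x; case: (boolP (x \in t @: S)) => [/imsetP[y yS ->]|];
    by rewrite ?tS ?andbF.
rewrite big_imset; last by move=> x y; rewrite !inE; exact: t_inj.
rewrite -big_split /= addr_ge0 ?sumr_ge0 // => x.
  by rewrite inE => /gt_ge0.
by case/andP => /ge0_notS.
Qed.

Lemma ler_sum_pair (R : numDomainType) (I : finType) (h : I -> R)
    (A : {set I}) a b :
  (forall x, 0 <= h x) -> a != b -> a \in A -> b \in A ->
  h a + h b <= \sum_(x in A) h x.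
Proof.
move=> h_ge0 ab aA bA; rewrite (bigD1 a) //= (bigD1 b) /=; last by rewrite bA eq_sym.
by rewrite addrA lerDl sumr_ge0.
Qed.

Lemma connect_image (T U : finType) (e : rel T) (eU : rel U) (f : T -> U) :
  (forall x y, e x y -> f x != f y -> eU (f x) (f y)) ->
  forall x y, connect e x y -> connect eU (f x) (f y).
Proof.
move=> f_edge x y /connectP[p + ->]; elim: p x => [|z p IHp] x /=.
  by rewrite connect0.
case/andP=> exz /IHp; apply: connect_trans.
by case: (eqVneq (f x) (f z)) => [->|fxz]; [exact: connect0 | exact/connect1/f_edge].
Qed.

Section Twins.
Variables (T : finType) (e : rel T).

Lemma mem_Rk1 x y z : x != y ->
  (z \in Rk e 1 x y) = [|| z == x, z == y | e x z != e y z].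
Proof.
have edge_ex a b : [exists w, e a w && (w == b)] = e a b.
  by apply/existsP/idP => [[w /andP[eaw /eqP <-]] | eab]; last by exists b; rewrite eab eqxx.
move=> xy; have yx : y != x by rewrite eq_sym.
rewrite inE /dtrunc !big_ord_recr !big_ord0 /= !edge_ex.
case: (eqVneq z x) => [->|zx]; first by rewrite (negbTE yx); case: (e y x).
case: (eqVneq z y) => [->|zy]; first by case: (e x y).
by case: (e x z); case: (e y z).
Qed.

Lemma Rk_sym k x y : Rk e k x y = Rk e k y x.
Proof. by apply/setP => z; rewrite !inE eq_sym. Qed.

(* Unlike the usual notion, [twins x x] holds, which makes [twins] an equivalence. *)
Definition twins x y := [forall z, (z != x) && (z != y) ==> (e x z == e y z)].

Definition twinned := forall x, exists2 y, y != x & twins x y.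

Lemma twinsP x y :
  reflect (forall z, z != x -> z != y -> e x z = e y z) (twins x y).
Proof.
apply: (iffP forallP) => [H z zx zy | H z].
  by apply/eqP; move/implyP: (H z); apply; rewrite zx zy.
by apply/implyP => /andP[zx zy]; rewrite H.
Qed.

Lemma twins_refl x : twins x x.
Proof. exact/twinsP. Qed.

Lemma twins_sym x y : twins x y = twins y x.
Proof. by apply/twinsP/twinsP => H z zx zy; rewrite H. Qed.

Lemma Rk1_twins x y : x != y -> twins x y -> Rk e 1 x y = [set x; y].
Proof.
move=> xy /twinsP txy; apply/setP => z; rewrite mem_Rk1 // !inE.
by case: (eqVneq z x) => // zx; case: (eqVneq z y) => //= zy; rewrite txy ?eqxx.
Qed.

Lemma Rk1_notwins x y : ~~ twins x y ->
  exists z, [/\ z != x, z != y & z \in Rk e 1 x y].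
Proof.
move=> ntxy; have xy : x != y by apply: contraNneq ntxy => ->; exact: twins_refl.
move/forallPn: ntxy => [z]; rewrite negb_imply => /andP[/andP[zx zy] exyz].
by exists z; rewrite mem_Rk1 // exyz !orbT.
Qed.

Hypothesis e_sym : symmetric e.

Lemma twins_trans : transitive twins.
Proof.
move=> y x z /twinsP txy /twinsP tyz; apply/twinsP => w.
case: (eqVneq w y) => [-> yx yz | wy wx wz]; last by rewrite txy // tyz.
case: (eqVneq x z) => [-> // | xz].
have [xy zx zy] : [/\ x != y, z != x & z != y] by rewrite !(eq_sym z) eq_sym.
by rewrite e_sym tyz // e_sym txy // e_sym.
Qed.

Lemma twins_edge x x' y y' :
  twins x x' -> twins y y' -> ~~ twins x y -> e x y = e x' y'.
Proof.
have step a a' b : twins a a' -> ~~ twins a b -> e a b = e a' b.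
  move=> taa' ntab; have /twinsP -> // := taa'.
    by apply: contraNneq ntab => ->; exact: twins_refl.
  by apply: contraNneq ntab => ->.
move=> txx' tyy' ntxy; have ntyx' : ~~ twins y x'.
  by rewrite twins_sym; apply: contraNN ntxy => /(twins_trans txx').
by rewrite (step _ _ _ txx' ntxy) e_sym (step _ _ _ tyy' ntyx') e_sym.
Qed.

Lemma twins_class_edge a b c d : twins a b -> twins a c -> twins a d ->
  a != b -> c != d -> e a b = e c d.
Proof.
have same_other p q r : twins q r -> p != q -> p != r -> e p q = e p r.
  by move=> /twinsP tqr pq pr; rewrite e_sym tqr // e_sym.
move=> tab tac tad ab.
have class p q : twins a p -> twins a q -> twins p q.
  by rewrite twins_sym; exact: twins_trans.
case: (eqVneq c a) => [-> ad | ca cd]; first exact: same_other (class _ _ tab tad) ab ad.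
rewrite (same_other a b c (class _ _ tab tac) ab); last by rewrite eq_sym.
by rewrite e_sym; apply: same_other.
Qed.

End Twins.

Section FractionalDimension.
Variables (R : realFieldType) (T : finType) (e : rel T).

Lemma sum_half : \sum_(v : T) (1 / 2 : R) = #|T|%:R / 2.
Proof. by rewrite sumr_const -mulr_natl cardE -cardT; lra. Qed.

Lemma half_resolving : trunc_resolving_fun e 1 (fun _ => 1 / 2 : R).
Proof.
split => [v | x y xy]; first by apply/andP; split; lra.
apply: le_trans (ler_sum_pair (A := Rk e 1 x y) _ xy _ _) => [| v | |];
  rewrite ?mem_Rk1 ?eqxx ?orbT //; lra.
Qed.

Lemma twins_resolving_pair (h : T -> R) x y : trunc_resolving_fun e 1 h ->
  x != y -> twins e x y -> 1 <= h x + h y.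
Proof.
move=> [_ h_res] xy txy; have := h_res x y xy.
by rewrite Rk1_twins // big_setU1 ?inE //= big_set1.
Qed.

Definition half_except v (z : T) : R := if z == v then 0 else 1 / 2.

Lemma sum_half_except v : \sum_z half_except v z = #|T|%:R / 2 - 1 / 2.
Proof.
rewrite -sum_half (bigD1 v) //= [in RHS](bigD1 v) //= /half_except eqxx.
by rewrite (eq_bigr (fun=> 1 / 2)) => [|z /negbTE ->] //; lra.
Qed.

Lemma twinless_resolving v : (forall y, y != v -> ~~ twins e v y) ->
  trunc_resolving_fun e 1 (half_except v).
Proof.
move=> v_twinless; have h_ge0 z : 0 <= half_except v z.
  by rewrite /half_except; case: (z == v); lra.
split => [z | x y xy]; first by rewrite /half_except; case: (z == v); apply/andP; split; lra.
suff [a [b [ab av bv aR bR]]] : exists a b,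
    [/\ a != b, a != v, b != v, a \in Rk e 1 x y & b \in Rk e 1 x y].
  apply: le_trans (ler_sum_pair h_ge0 ab aR bR).
  by rewrite /half_except (negbTE av) (negbTE bv); lra.
wlog xv : x y xy / x != v.
  move=> wlog_xv; case: (eqVneq x v) => [xv | ]; last exact: wlog_xv.
  by rewrite Rk_sym; apply: wlog_xv; rewrite eq_sym // -xv.
case: (eqVneq y v) => [-> | yv]; last by exists x, y; rewrite !mem_Rk1 // !eqxx /= orbT.
have [z [zv zx zR]] := Rk1_notwins (v_twinless x xv).
have vx : v != x by rewrite eq_sym.
by exists x, z; rewrite eq_sym Rk_sym mem_Rk1 // eqxx /= orbT.
Qed.

Hypothesis e_sym : symmetric e.

Lemma twinned_resolving_ge_half (h : T -> R) :
  twinned e -> trunc_resolving_fun e 1 h -> #|T|%:R / 2 <= \sum_v h v.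
Proof.
move=> has_twin h_res; pose t x := odflt x [pick y | (y != x) && twins e x y].
have t_twin x : t x != x /\ twins e x (t x).
  rewrite /t; case: pickP => [y /andP[] // | none].
  by case: (has_twin x) => y yx txy; move: (none y); rewrite yx txy.
have t_pair x : 1 <= h x + h (t x).
  by case: (t_twin x) => tx ttx; apply: twins_resolving_pair; rewrite 1?eq_sym.
suff : 0 <= \sum_v (h v - 1 / 2) by rewrite sumrB sum_half subr_ge0.
apply: (sumr_ge0_matching (t := t)) => [x x' | x _]; last by have := t_pair x; lra.
rewrite !inE => hx hx' txx'; case: (eqVneq x x') => [// | xx']; exfalso.
have [_ txt] := t_twin x; have [_ tx't] := t_twin x'.
rewrite -txx' twins_sym in tx't.
have := twins_resolving_pair h_res xx' (twins_trans e_sym txt tx't); lra.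
Qed.

End FractionalDimension.

Section BlowUp.
Variables (T : finType) (e : rel T).
Hypotheses (e_sym : symmetric e) (e_irr : irreflexive e).

Lemma lex_family_twinned : in_lex_family e -> twinned e.
Proof.
case=> U [eH [f [_ _ fibre_ge2 fibre_edges adj]]] x.
have [y yx fyx] : exists2 y, y != x & f y = f x.
  have /card_gt1P[a [b [+ + ab]]] := fibre_ge2 (f x); rewrite !inE => /eqP fa /eqP fb.
  case: (eqVneq a x) => [ax | ax]; last by exists a.
  by exists b; rewrite // -ax eq_sym.
exists y => //; apply/twinsP => z zx zy.
case: (eqVneq (f z) (f x)) => [fzx | fzx].
  have [xz yz] : x != z /\ y != z by rewrite !(eq_sym _ z).
  case: (fibre_edges (f x)) => [complete | edgeless]; first by rewrite !complete.
  by rewrite (negbTE (edgeless _ _ _ _)) // (negbTE (edgeless _ _ _ _)).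
have fxz : f x != f z by rewrite eq_sym.
by rewrite (adj _ _ fxz) (adj y z) fyx.
Qed.

Definition twins_equiv :=
  EquivRel (twins e) (@twins_refl T e) (@twins_sym T e) (twins_trans e_sym).
Definition twin_class := {eq_quot twins_equiv}.
(* The library only makes [{eq_quot _}] countable. *)
HB.instance Definition _ := [Finite of twin_class by <:%/].

(* [\pi x] lives in a type whose eqType instance is only convertible to that of
   [twin_class]; [twin_pi] fixes the latter. *)
Definition twin_pi (x : T) : twin_class := \pi x.

Definition quotient_graph : rel twin_class := fun u w => (u != w) && e (repr u) (repr w).

Lemma twin_piK : cancel repr twin_pi.
Proof. exact: reprK. Qed.

Lemma twin_pi_eq x y : (twin_pi x == twin_pi y) = twins e x y.
Proof. by apply/eqP/idP => [/eqquotP | /(@eqquotP _ _ twin_class)]. Qed.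

Lemma twins_repr x : twins e x (repr (twin_pi x)).
Proof. by rewrite -twin_pi_eq twin_piK. Qed.

Lemma quotient_edge x y : twin_pi x != twin_pi y ->
  e x y = quotient_graph (twin_pi x) (twin_pi y).
Proof.
move=> ne; rewrite /quotient_graph ne; apply: twins_edge; rewrite ?twins_repr //.
by rewrite -twin_pi_eq.
Qed.

Lemma twin_class_uniform u :
  (forall x y, twin_pi x = u -> twin_pi y = u -> x != y -> e x y) \/
  (forall x y, twin_pi x = u -> twin_pi y = u -> ~~ e x y).
Proof.
case: (boolP [exists a, exists b, [&& twin_pi a == u, twin_pi b == u, a != b & e a b]]).
  move=> /existsP[a /existsP[b /and4P[/eqP pa /eqP pb ab eab]]]; left => c d pc pd cd.
  by rewrite -(twins_class_edge e_sym _ _ _ ab cd) // -twin_pi_eq ?pa ?pb ?pc ?pd.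
move=> /existsPn none; right => c d pc pd; case: (eqVneq c d) => [-> | cd].
  by rewrite e_irr.
by move/existsPn: (none c) => /(_ d); rewrite pc pd cd !eqxx.
Qed.

Lemma twinned_lex_family : connected_graph e -> twinned e -> in_lex_family e.
Proof.
move=> e_conn has_twin; exists twin_class, quotient_graph, twin_pi; split.
- by split => [u w | u]; rewrite /quotient_graph ?eqxx // eq_sym e_sym.
- move=> u w; rewrite -(twin_piK u) -(twin_piK w); apply: connect_image (e_conn _ _).
  by move=> x y exy ne; rewrite -quotient_edge.
- move=> u; have [y yu tuy] := has_twin (repr u).
  apply/card_gt1P; exists (repr u), y.
  split; rewrite ?inE ?twin_piK //; last by rewrite eq_sym.
  by rewrite -(twin_piK u) twin_pi_eq twins_sym.
- exact: twin_class_uniform.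
- exact: quotient_edge.
Qed.

End BlowUp.

Theorem theorem2p8 (R : realFieldType) (T : finType) (e : rel T) :
  simple_graph e -> connected_graph e -> (2 <= #|T|)%N ->
  (is_frac_trunc_dim e 1 (#|T|%:R / 2 : R) <-> in_lex_family e).
Proof.
move=> [e_sym e_irr] e_conn _; split.
- case=> _ half_min; apply: twinned_lex_family => // v.
  case: (pickP (fun y => (y != v) && twins e v y)) => [y /andP[yv tvy] | none].
    by exists y.
  have v_twinless y : y != v -> ~~ twins e v y.
    by move=> yv; have := none y; rewrite yv /= => ->.
  by have := half_min _ (twinless_resolving R v_twinless); rewrite sum_half_except; lra.
- move=> lex; split.
    by exists (fun _ => 1 / 2); split; [exact: half_resolving | exact: sum_half].
  by move=> h; apply: twinned_resolving_ge_half => //; exact: lex_family_twinned.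
Qed.
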